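(* Let $X \subset Y \subset \mathbb{R}^{n}$ be finite sets, let $r>0$, and suppose that $X$ is $r$-dense in $Y$. Let $0 = s_{0} < s_{1} < \dots < s_{m}$ be the phase-change numbers of $Y$, and let $0 \le i < m$ be such that $2r < s_{i+1} - s_{i}$. Then the inclusion $i: V_{s_{i}}(X) \to V_{s_{i}}(Y)$ is a weak homotopy equivalence (its geometric realization is a homotopy equivalence).
   Context: $\mathbb{R}^n$ carries the Euclidean metric $d$. For subsets $A \subset B$ of a metric space and $r>0$, $A$ is $r$-dense in $B$ if for every $b \in B$ there is an $a \in A$ with $d(a,b) < r$. For a finite set $X \subset \mathbb{R}^n$ and $s \geq 0$, $V_{s}(X)$ denotes the Vietoris–Rips complex: the simplicial complex with vertex set $X$ whose simplices are the nonempty subsets $\{x_{0}, \dots, x_{p}\}$ of $X$ with $d(x_{i},x_{j}) \leq s$ for all $i,j$. For $X \subset Y$, $i: V_{s}(X) \to V_{s}(Y)$ denotes the induced inclusion. The phase-change numbers of a finite set $Y$ are the distinct values of $d(y,y')$ for $y,y' \in Y$, listed in increasing order $0 = s_{0} < s_{1} < \dots < s_{m}$. *)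

From Stdlib Require Import Reals List.
Import ListNotations.
Open Scope R_scope.

(** Points of R^n are lists of reals of length n. *)
Definition point := list R.

Fixpoint sqdist (x y : point) : R :=
  match x, y with
  | a :: x', b :: y' => (a - b) ^ 2 + sqdist x' y'
  | _, _ => 0
  end.

Definition dist (x y : point) : R := sqrt (sqdist x y).

Definition r_dense (r : R) (A B : list point) : Prop :=
  forall b, In b B -> exists a, In a A /\ dist a b < r.

(** [s] is a phase-change number of [Y] (a distance value between points of Y). *)
Definition phase_value (Y : list point) (s : R) : Prop :=
  exists y y', In y Y /\ In y' Y /\ dist y y' = s.

(** [s] and [s'] are consecutive phase-change numbers of [Y]: s = s_i, s' = s_{i+1}. *)
Definition consecutive_phase (Y : list point) (s s' : R) : Prop :=
  phase_value Y s /\ phase_value Y s' /\ s < s' /\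
  forall t, phase_value Y t -> ~ (s < t /\ t < s').

Fixpoint sumN (a : nat -> R) (N : nat) : R :=
  match N with
  | O => 0
  | S k => sumN a k + a k
  end.

(** Geometric realization of the Vietoris-Rips complex V_s(X), for X a subset
    of the vertex list Y (duplicate-free), embedded via barycentric coordinates
    in R^{length Y}: coordinate j corresponds to the point nth j Y.
    A point is a convex combination of the vertices of a simplex of V_s(X). *)
Definition VR_real (Y : list point) (X : point -> Prop) (s : R) (a : nat -> R) : Prop :=
  (forall j, (length Y <= j)%nat -> a j = 0) /\
  (forall j, 0 <= a j) /\
  sumN a (length Y) = 1 /\
  (forall j, (j < length Y)%nat -> a j <> 0 -> X (nth j Y [])) /\
  (forall j k, (j < length Y)%nat -> (k < length Y)%nat -> a j <> 0 -> a k <> 0 ->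
     dist (nth j Y []) (nth k Y []) <= s).

Fixpoint dmax (N : nat) (a b : nat -> R) : R :=
  match N with
  | O => 0
  | S k => Rmax (dmax k a b) (Rabs (a k - b k))
  end.

Definition cont_map (N : nat) (A B : (nat -> R) -> Prop) (f : (nat -> R) -> (nat -> R)) : Prop :=
  (forall a, A a -> B (f a)) /\
  forall a, A a -> forall eps, 0 < eps -> exists delta, 0 < delta /\
    forall b, A b -> dmax N b a < delta -> dmax N (f b) (f a) < eps.

Definition homotopic (N : nat) (A B : (nat -> R) -> Prop)
    (f g : (nat -> R) -> (nat -> R)) : Prop :=
  exists H : R -> (nat -> R) -> (nat -> R),
    (forall t a, 0 <= t <= 1 -> A a -> B (H t a)) /\
    (forall t a, 0 <= t <= 1 -> A a -> forall eps, 0 < eps -> exists delta, 0 < delta /\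
       forall t' b, 0 <= t' <= 1 -> A b -> Rabs (t' - t) < delta -> dmax N b a < delta ->
         dmax N (H t' b) (H t a) < eps) /\
    (forall a, A a -> forall j, H 0 a j = f a j) /\
    (forall a, A a -> forall j, H 1 a j = g a j).

Definition inclusion_homotopy_equiv (N : nat) (A B : (nat -> R) -> Prop) : Prop :=
  (forall a, A a -> B a) /\
  exists g, cont_map N B A g /\
    homotopic N A A (fun a => g a) (fun a => a) /\
    homotopic N B B (fun a => g a) (fun a => a).

From Pilot Require Import Defs.
From Stdlib Require Import Reals List Lia Lra Psatz FunctionalExtensionality.
Import ListNotations.
Import Pilot.Defs.
Open Scope R_scope.

(** Since X is r-dense in Y, every vertex y_j of Y has a vertex
    y_(phi j) of X within distance r.  Pushing barycentric coordinates forward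
    along phi gives a map g : |V_s(Y)| -> |V_s(X)|: if the vertices of a simplex
    are pairwise at distance <= s, their images and the vertices themselves are
    pairwise at distance < s + 2r < s', hence <= s because no distance of Y lies
    in (s, s').  For the same reason every straight-line segment from g(a) to a
    stays inside |V_s(Y)|, and inside |V_s(X)| when a is supported on X.  The
    segments give homotopies g ~ id on both realizations, so g is a homotopy
    inverse of the inclusion. *)

Lemma sumN_ext (f g : nat -> R) (N : nat) :
  (forall j, (j < N)%nat -> f j = g j) -> sumN f N = sumN g N.
Proof.
  induction N as [|N IH]; intros E; simpl; [reflexivity|].
  rewrite IH by (intros; apply E; lia). rewrite E by lia. reflexivity.
Qed.

Lemma sumN_zero (f : nat -> R) (N : nat) :
  (forall j, (j < N)%nat -> f j = 0) -> sumN f N = 0.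
Proof.
  intros E; rewrite (sumN_ext f (fun _ => 0)) by exact E.
  clear E; induction N as [|N IH]; simpl; lra.
Qed.

Lemma sumN_lin (c d : R) (f g : nat -> R) (N : nat) :
  sumN (fun j => c * f j + d * g j) N = c * sumN f N + d * sumN g N.
Proof. induction N as [|N IH]; simpl; [ring|]. rewrite IH; ring. Qed.

Lemma sumN_nonneg (f : nat -> R) (N : nat) :
  (forall j, 0 <= f j) -> 0 <= sumN f N.
Proof. intros H; induction N as [|N IH]; simpl; [lra|]. specialize (H N); lra. Qed.

Lemma sumN_nonzero (f : nat -> R) (N : nat) :
  sumN f N <> 0 -> exists j, (j < N)%nat /\ f j <> 0.
Proof.
  induction N as [|N IH]; simpl; intros H; [lra|].
  destruct (Req_dec (f N) 0) as [E|E].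
  - rewrite E, Rplus_0_r in H. destruct (IH H) as [j [? ?]]. exists j; split; [lia|auto].
  - exists N; split; [lia|auto].
Qed.

Lemma sumN_abs_le (f : nat -> R) (c : R) (N : nat) :
  (forall j, (j < N)%nat -> Rabs (f j) <= c) -> Rabs (sumN f N) <= INR N * c.
Proof.
  induction N as [|N IH]; intros H; simpl sumN.
  - rewrite Rabs_R0; simpl; lra.
  - rewrite S_INR. eapply Rle_trans; [apply Rabs_triang|].
    assert (Rabs (sumN f N) <= INR N * c) by (apply IH; intros; apply H; lia).
    specialize (H N ltac:(lia)). lra.
Qed.

Lemma sumN_swap (F : nat -> nat -> R) (N M : nat) :
  sumN (fun k => sumN (fun j => F j k) M) N = sumN (fun j => sumN (fun k => F j k) N) M.
Proof.
  induction M as [|M IH]; simpl.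
  - apply sumN_zero; reflexivity.
  - rewrite <- IH. clear IH. induction N as [|N IH]; simpl; [ring|]. rewrite IH; ring.
Qed.

Lemma sumN_indicator (m : nat) (c : R) (N : nat) : (m < N)%nat ->
  sumN (fun k => if Nat.eq_dec m k then c else 0) N = c.
Proof.
  induction N as [|N IH]; simpl; intros H; [lia|].
  destruct (Nat.eq_dec m N) as [->|Hne].
  - rewrite sumN_zero; [lra|]. intros j Hj. destruct (Nat.eq_dec N j); [lia|reflexivity].
  - rewrite IH by lia. lra.
Qed.

Lemma dmax_nonneg (N : nat) (a b : nat -> R) : 0 <= dmax N a b.
Proof. induction N; simpl; [lra|]. eapply Rle_trans; [eassumption|apply Rmax_l]. Qed.

Lemma dmax_ge (N : nat) (a b : nat -> R) (j : nat) :
  (j < N)%nat -> Rabs (a j - b j) <= dmax N a b.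
Proof.
  induction N as [|N IH]; simpl; intros H; [lia|].
  destruct (Nat.eq_dec j N) as [->|]; [apply Rmax_r|].
  eapply Rle_trans; [apply IH; lia|apply Rmax_l].
Qed.

Lemma dmax_le (N : nat) (a b : nat -> R) (c : R) : 0 <= c ->
  (forall j, (j < N)%nat -> Rabs (a j - b j) <= c) -> dmax N a b <= c.
Proof.
  intros Hc; induction N as [|N IH]; simpl; intros H; [lra|].
  apply Rmax_lub; [apply IH; intros; apply H; lia|apply H; lia].
Qed.

Lemma sqdist_nonneg (x y : point) : 0 <= sqdist x y.
Proof.
  revert y; induction x as [|a x IH]; destruct y as [|b y]; simpl; try lra.
  specialize (IH y). pose proof (pow2_ge_0 (a - b)). lra.
Qed.

Lemma dist_sym (x y : point) : dist x y = dist y x.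
Proof.
  unfold dist; f_equal. revert y; induction x; destruct y; simpl; auto.
  rewrite IHx; ring.
Qed.

Lemma dist_self (x : point) : dist x x = 0.
Proof.
  unfold dist. replace (sqdist x x) with 0; [apply sqrt_0|].
  induction x; simpl; auto. rewrite <- IHx; ring.
Qed.

(** Minkowski's inequality in the plane, where the second coordinates are
    nonnegative: the inductive step of the triangle inequality. *)
Lemma minkowski_plane (u v U V : R) : 0 <= U -> 0 <= V ->
  sqrt ((u + v) ^ 2 + (U + V) ^ 2) <= sqrt (u ^ 2 + U ^ 2) + sqrt (v ^ 2 + V ^ 2).
Proof.
  intros HU HV.
  pose proof (pow2_ge_0 u); pose proof (pow2_ge_0 v);
  pose proof (pow2_ge_0 U); pose proof (pow2_ge_0 V).
  set (p := sqrt (u ^ 2 + U ^ 2)); set (q := sqrt (v ^ 2 + V ^ 2)).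
  assert (Hp : p * p = u ^ 2 + U ^ 2) by (apply sqrt_sqrt; lra).
  assert (Hq : q * q = v ^ 2 + V ^ 2) by (apply sqrt_sqrt; lra).
  assert (p0 : 0 <= p) by apply sqrt_pos. assert (q0 : 0 <= q) by apply sqrt_pos.
  assert (cauchy_schwarz : u * v + U * V <= p * q).
  { assert ((u * v + U * V) * (u * v + U * V) <= (p * q) * (p * q)).
    { replace ((p * q) * (p * q)) with ((p * p) * (q * q)) by ring. rewrite Hp, Hq.
      pose proof (pow2_ge_0 (u * V - v * U)).
      replace ((u ^ 2 + U ^ 2) * (v ^ 2 + V ^ 2))
        with ((u * v + U * V) * (u * v + U * V) + (u * V - v * U) ^ 2) by ring.
      lra. }
    assert (0 <= p * q) by nra. nra. }
  rewrite <- (sqrt_square (p + q)) by lra. apply sqrt_le_1_alt.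
  replace ((p + q) * (p + q)) with (p * p + q * q + 2 * (p * q)) by ring.
  rewrite Hp, Hq. lra.
Qed.

Lemma dist_triangle (x y z : point) : length x = length y -> length y = length z ->
  dist x z <= dist x y + dist y z.
Proof.
  revert y z; induction x as [|a x IH]; destruct y as [|b y], z as [|c z];
    simpl; intros H1 H2; try discriminate.
  - unfold dist; simpl; rewrite sqrt_0; lra.
  - injection H1 as E1; injection H2 as E2. specialize (IH y z E1 E2).
    unfold dist in *; simpl.
    pose proof (sqdist_nonneg x y); pose proof (sqdist_nonneg y z);
    pose proof (sqdist_nonneg x z).
    replace (sqdist x y) with (sqrt (sqdist x y) ^ 2)
      by (simpl; rewrite Rmult_1_r, sqrt_sqrt; auto).
    replace (sqdist y z) with (sqrt (sqdist y z) ^ 2)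
      by (simpl; rewrite Rmult_1_r, sqrt_sqrt; auto).
    replace (a - c) with ((a - b) + (b - c)) by ring.
    eapply Rle_trans; [|apply minkowski_plane; apply sqrt_pos].
    apply sqrt_le_1_alt.
    assert (sqdist x z <= (sqrt (sqdist x y) + sqrt (sqdist y z)) ^ 2).
    { rewrite <- (sqrt_sqrt (sqdist x z)) by auto.
      pose proof (sqrt_pos (sqdist x z)). nra. }
    lra.
Qed.

Definition lipschitz (N : nat) (L : R) (g : (nat -> R) -> (nat -> R)) : Prop :=
  forall a b k, (k < N)%nat -> Rabs (g b k - g a k) <= L * dmax N b a.

Definition segment (t : R) (u v : nat -> R) : nat -> R :=
  fun k => (1 - t) * u k + t * v k.

Lemma lipschitz_cont_map (N : nat) (L : R) (A B : (nat -> R) -> Prop)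
    (g : (nat -> R) -> (nat -> R)) :
  0 <= L -> lipschitz N L g -> (forall a, A a -> B (g a)) -> cont_map N A B g.
Proof.
  intros HL Hg Hmaps; split; [exact Hmaps|]. intros a _ eps Heps.
  exists (eps / (L + 1)); split; [apply Rdiv_lt_0_compat; lra|].
  intros b _ Hb.
  assert (Hd : eps / (L + 1) * (L + 1) = eps) by (field; lra).
  pose proof (dmax_nonneg N b a).
  apply Rle_lt_trans with (L * dmax N b a); [apply dmax_le; [nra|exact (Hg a b)]|].
  assert (0 < eps / (L + 1)) by (apply Rdiv_lt_0_compat; lra). nra.
Qed.

Lemma segment_homotopic (N : nat) (L : R) (A : (nat -> R) -> Prop)
    (g : (nat -> R) -> (nat -> R)) :
  0 <= L -> lipschitz N L g ->
  (forall t a, 0 <= t <= 1 -> A a -> A (segment t (g a) a)) ->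
  homotopic N A A (fun a => g a) (fun a => a).
Proof.
  intros HL Hg Hseg. exists (fun t a => segment t (g a) a).
  split; [exact Hseg|]. split; [|split; intros; unfold segment; ring].
  intros t a Ht _ eps Heps.
  set (M := dmax N a (g a) + 1).
  assert (1 <= M) by (pose proof (dmax_nonneg N a (g a)); unfold M; lra).
  set (d := eps / (L + 2 + M)).
  assert (Hd : d * (L + 2 + M) = eps) by (unfold d; field; lra).
  assert (d_pos : 0 < d) by (unfold d; apply Rdiv_lt_0_compat; lra).
  exists d; split; [exact d_pos|]. intros t' b Ht' _ Htt Hb.
  apply Rle_lt_trans with (L * d + d + d * M); [|nra].
  apply dmax_le; [nra|]. intros k Hk.
  (* Split the displacement into the moves of [g b], of [b] and of [t]. *)
  replace (segment t' (g b) b k - segment t (g a) a k)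
    with ((1 - t') * (g b k - g a k) + t' * (b k - a k) + (t' - t) * (a k - g a k))
    by (unfold segment; ring).
  pose proof (Hg a b k Hk) as Lg. pose proof (dmax_ge N b a k Hk) as Lb.
  pose proof (dmax_ge N a (g a) k Hk) as La. pose proof (dmax_nonneg N b a).
  eapply Rle_trans; [apply Rabs_triang|].
  eapply Rle_trans; [apply Rplus_le_compat_r, Rabs_triang|].
  rewrite !Rabs_mult, (Rabs_pos_eq (1 - t')), (Rabs_pos_eq t') by lra.
  pose proof (Rabs_pos (g b k - g a k)); pose proof (Rabs_pos (b k - a k));
  pose proof (Rabs_pos (t' - t)); pose proof (Rabs_pos (a k - g a k)).
  assert ((1 - t') * Rabs (g b k - g a k) <= L * d) by nra.
  assert (t' * Rabs (b k - a k) <= d) by nra.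
  assert (Rabs (t' - t) * Rabs (a k - g a k) <= d * M) by (unfold M in *; nra).
  lra.
Qed.

(** * Pushing barycentric coordinates forward along a vertex map *)

Section Pushforward.

Variable Y : list point.
Variable phi : nat -> nat.
Hypothesis phi_range : forall j, (j < length Y)%nat -> (phi j < length Y)%nat.

Definition pushforward (a : nat -> R) (k : nat) : R :=
  sumN (fun j => if Nat.eq_dec (phi j) k then a j else 0) (length Y).

Lemma pushforward_nonneg (a : nat -> R) (k : nat) :
  (forall j, 0 <= a j) -> 0 <= pushforward a k.
Proof. intros H; apply sumN_nonneg; intros j; destruct Nat.eq_dec; [apply H|lra]. Qed.

Lemma pushforward_out (a : nat -> R) (k : nat) :
  (length Y <= k)%nat -> pushforward a k = 0.
Proof.
  intros H; apply sumN_zero; intros j Hj. pose proof (phi_range j Hj).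
  destruct Nat.eq_dec; [lia|reflexivity].
Qed.

Lemma pushforward_sum (a : nat -> R) :
  sumN (pushforward a) (length Y) = sumN a (length Y).
Proof.
  unfold pushforward.
  rewrite (sumN_swap (fun j k => if Nat.eq_dec (phi j) k then a j else 0)).
  apply sumN_ext; intros j Hj. apply sumN_indicator, phi_range, Hj.
Qed.

Lemma pushforward_support (a : nat -> R) (k : nat) : pushforward a k <> 0 ->
  exists j, (j < length Y)%nat /\ phi j = k /\ a j <> 0.
Proof.
  intros H. destruct (sumN_nonzero _ _ H) as [j [Hj Ha]].
  destruct Nat.eq_dec; [|lra]. exists j; auto.
Qed.

Lemma pushforward_lipschitz : lipschitz (length Y) (INR (length Y)) pushforward.
Proof.
  intros a b k _. unfold pushforward.
  set (F := fun (c : nat -> R) j => if Nat.eq_dec (phi j) k then c j else 0).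
  change (Rabs (sumN (F b) (length Y) - sumN (F a) (length Y))
          <= INR (length Y) * dmax (length Y) b a).
  replace (sumN (F b) (length Y) - sumN (F a) (length Y))
    with (sumN (fun j => 1 * F b j + -1 * F a j) (length Y)) by (rewrite sumN_lin; ring).
  apply sumN_abs_le; intros j Hj. unfold F; destruct Nat.eq_dec.
  - replace (1 * b j + -1 * a j) with (b j - a j) by ring. apply dmax_ge, Hj.
  - replace (1 * 0 + -1 * 0) with 0 by ring. rewrite Rabs_R0. apply dmax_nonneg.
Qed.

Lemma segment_support (t : R) (a : nat -> R) (k : nat) :
  (k < length Y)%nat -> segment t (pushforward a) a k <> 0 ->
  exists i, (i < length Y)%nat /\ a i <> 0 /\ ((t <> 0 /\ k = i) \/ k = phi i).
Proof.
  unfold segment; intros Hk H.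
  destruct (Req_dec (pushforward a k) 0) as [E|E].
  - rewrite E in H.
    assert (t <> 0 /\ a k <> 0) as [Ht Ha] by (split; intro F; apply H; rewrite F; ring).
    exists k; auto.
  - destruct (pushforward_support a k E) as [j [Hj [<- Hj0]]]. exists j; auto.
Qed.

End Pushforward.

(** * Vertex maps that move every vertex less than half the gap *)

Section SmallDisplacement.

Variable n : nat.
Variable Y : list point.
Variables r s s' : R.
Variable phi : nat -> nat.
Hypothesis Y_dim : Forall (fun p => length p = n) Y.
Hypothesis phi_near : forall j, (j < length Y)%nat ->
  (phi j < length Y)%nat /\ dist (nth j Y []) (nth (phi j) Y []) < r.
Hypothesis no_distance_in_gap : forall j k, (j < length Y)%nat -> (k < length Y)%nat ->
  dist (nth j Y []) (nth k Y []) < s' -> dist (nth j Y []) (nth k Y []) <= s.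
Hypothesis gap_large : 2 * r < s' - s.

Lemma phi_in_range : forall j, (j < length Y)%nat -> (phi j < length Y)%nat.
Proof. intros j Hj; apply phi_near, Hj. Qed.

Lemma vertex_or_image_near (i x : nat) : (i < length Y)%nat -> (x = i \/ x = phi i) ->
  (x < length Y)%nat /\ dist (nth x Y []) (nth i Y []) < r.
Proof.
  intros Hi [->| ->]; destruct (phi_near i Hi) as [Hr Hd].
  - rewrite dist_self. pose proof (sqrt_pos (sqdist (nth i Y []) (nth (phi i) Y []))).
    unfold dist in Hd; split; [auto|lra].
  - rewrite dist_sym; auto.
Qed.

(** The key estimate: replacing the ends of an edge of V_s(Y) by their images
    under [phi] changes its length by less than [2r], so the gap keeps it [<= s]. *)
Lemma edge_perturbation (i1 i2 x1 x2 : nat) :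
  (i1 < length Y)%nat -> (i2 < length Y)%nat ->
  dist (nth i1 Y []) (nth i2 Y []) <= s ->
  (x1 = i1 \/ x1 = phi i1) -> (x2 = i2 \/ x2 = phi i2) ->
  dist (nth x1 Y []) (nth x2 Y []) <= s.
Proof.
  intros H1 H2 Hd E1 E2.
  destruct (vertex_or_image_near _ _ H1 E1) as [L1 D1].
  destruct (vertex_or_image_near _ _ H2 E2) as [L2 D2].
  assert (dimension : forall j, (j < length Y)%nat -> length (nth j Y []) = n)
    by (intros; apply (proj1 (Forall_nth _ _) Y_dim); auto).
  apply no_distance_in_gap; auto.
  pose proof (dist_triangle (nth x1 Y []) (nth i1 Y []) (nth x2 Y [])) as T1.
  pose proof (dist_triangle (nth i1 Y []) (nth i2 Y []) (nth x2 Y [])) as T2.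
  rewrite !dimension in T1, T2 by auto.
  specialize (T1 eq_refl eq_refl); specialize (T2 eq_refl eq_refl).
  rewrite (dist_sym (nth i2 Y [])) in T2. lra.
Qed.

Lemma segment_in_VR (P : point -> Prop) (t : R) (a : nat -> R) : 0 <= t <= 1 ->
  VR_real Y (fun p => In p Y) s a ->
  (t <> 0 -> forall j, (j < length Y)%nat -> a j <> 0 -> P (nth j Y [])) ->
  (forall j, (j < length Y)%nat -> P (nth (phi j) Y [])) ->
  VR_real Y P s (segment t (pushforward Y phi a) a).
Proof.
  intros Ht [a_out [a_nonneg [a_sum [_ a_simplex]]]] P_supp P_image.
  pose proof (segment_support Y phi t a) as supp.
  unfold VR_real; repeat split.
  - intros j Hj. unfold segment.
    rewrite (pushforward_out Y phi phi_in_range), a_out by auto. ring.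
  - intros j. unfold segment.
    pose proof (pushforward_nonneg Y phi a j a_nonneg). pose proof (a_nonneg j).
    apply Rplus_le_le_0_compat; apply Rmult_le_pos; lra.
  - unfold segment. rewrite sumN_lin, (pushforward_sum Y phi phi_in_range), a_sum. ring.
  - intros j Hj H. destruct (supp j Hj H) as [i [Hi [Hai [[T ->]| ->]]]]; auto.
  - intros j k Hj Hk Hja Hka.
    destruct (supp j Hj Hja) as [i1 [Hi1 [A1 E1]]].
    destruct (supp k Hk Hka) as [i2 [Hi2 [A2 E2]]].
    apply (edge_perturbation i1 i2); auto; [destruct E1 as [[_ ->]| ->]|
                                             destruct E2 as [[_ ->]| ->]]; auto.
Qed.

End SmallDisplacement.

Lemma finite_choice (P : nat -> nat -> Prop) (N : nat) :
  (forall j, (j < N)%nat -> exists k, P j k) ->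
  exists f : nat -> nat, forall j, (j < N)%nat -> P j (f j).
Proof.
  induction N as [|N IH]; intros H.
  - exists (fun _ => O); intros; lia.
  - destruct IH as [f Hf]; [intros; apply H; lia|].
    destruct (H N ltac:(lia)) as [k Hk].
    exists (fun j => if Nat.eq_dec j N then k else f j).
    intros j Hj. destruct (Nat.eq_dec j N) as [->|]; [exact Hk|apply Hf; lia].
Qed.

Lemma nearest_vertex_map (X Y : list point) (r : R) :
  incl X Y -> r_dense r X Y ->
  exists phi : nat -> nat, forall j, (j < length Y)%nat ->
    ((phi j < length Y)%nat /\ dist (nth j Y []) (nth (phi j) Y []) < r) /\
    In (nth (phi j) Y []) X.
Proof.
  intros Hincl Hdense.
  apply (finite_choice (fun j k => ((k < length Y)%nat /\ dist (nth j Y []) (nth k Y []) < r)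
                                   /\ In (nth k Y []) X)).
  intros j Hj.
  destruct (Hdense (nth j Y []) (nth_In _ _ Hj)) as [x [Hx Dx]].
  destruct (In_nth Y x [] (Hincl _ Hx)) as [k [Hk <-]].
  exists k. rewrite dist_sym. auto.
Qed.

Lemma consecutive_phase_gap (Y : list point) (s s' : R) :
  consecutive_phase Y s s' ->
  forall j k, (j < length Y)%nat -> (k < length Y)%nat ->
    dist (nth j Y []) (nth k Y []) < s' -> dist (nth j Y []) (nth k Y []) <= s.
Proof.
  intros [_ [_ [_ Hnone]]] j k Hj Hk Hlt.
  destruct (Rle_lt_dec (dist (nth j Y []) (nth k Y [])) s) as [|Hgt]; [assumption|].
  exfalso. apply (Hnone (dist (nth j Y []) (nth k Y []))); [|lra].
  exists (nth j Y []), (nth k Y []). repeat split; apply nth_In; auto.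
Qed.

Theorem corollary2 (n : nat) (X Y : list point) (r s s' : R) :
  Forall (fun p => length p = n) Y ->
  NoDup Y ->
  incl X Y ->
  0 < r ->
  r_dense r X Y ->
  consecutive_phase Y s s' ->
  2 * r < s' - s ->
  inclusion_homotopy_equiv (length Y)
    (VR_real Y (fun p => In p X) s)
    (VR_real Y (fun p => In p Y) s).
Proof.
  intros Y_dim _ Hincl _ Hdense Hphase Hgap.
  destruct (nearest_vertex_map X Y r Hincl Hdense) as [phi Hphi].
  pose proof (consecutive_phase_gap Y s s' Hphase) as Hnone.
  assert (phi_near : forall j, (j < length Y)%nat ->
    (phi j < length Y)%nat /\ dist (nth j Y []) (nth (phi j) Y []) < r)
    by (intros; apply Hphi; auto).
  assert (image_in_X : forall j, (j < length Y)%nat -> In (nth (phi j) Y []) X)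
    by (intros; apply Hphi; auto).
  assert (image_in_Y : forall j, (j < length Y)%nat -> In (nth (phi j) Y []) Y)
    by (intros; apply nth_In, phi_near; auto).
  pose proof (segment_in_VR n Y r s s' phi Y_dim phi_near Hnone Hgap) as segment_in.
  pose proof (pushforward_lipschitz Y phi) as Hlip.
  pose proof (pos_INR (length Y)) as HL.
  assert (X_in_Y : forall a, VR_real Y (fun p => In p X) s a -> VR_real Y (fun p => In p Y) s a)
    by (intros a [? [? [? [_ ?]]]]; repeat split; auto; intros; apply nth_In; auto).
  split; [exact X_in_Y|]. exists (pushforward Y phi). split; [|split].
  - (* the push-forward is the endpoint t = 0 of the segments *)
    apply (lipschitz_cont_map _ _ _ _ _ HL Hlip). intros a Ha.
    assert (E : segment 0 (pushforward Y phi a) a = pushforward Y phi a)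
      by (apply functional_extensionality; intro; unfold segment; ring).
    rewrite <- E. apply segment_in; auto; lra.
  - apply (segment_homotopic _ _ _ _ HL Hlip). intros t a Ht Ha.
    apply segment_in; auto. intros _ j Hj Ha0. apply Ha; auto.
  - apply (segment_homotopic _ _ _ _ HL Hlip). intros t a Ht Ha.
    apply segment_in; auto. intros _ j Hj _. apply nth_In, Hj.
Qed.
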